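(* Let $T$ be a complete discrete valuation ring with fraction field $K$ and uniformizer $t$. Let $\widehat R_0 \supset T$ be a complete discrete valuation ring with uniformizer $t$ and fraction field $F_0$, with absolute value $|t^n u| = \alpha^{-n}$ ($\alpha>1$ fixed, $u \in \widehat R_0^\times$). Let $F_1, F_2 \subset F_0$ be subfields containing $T$ and let $V \subset F_1 \cap \widehat R_0$, $W \subset F_2 \cap \widehat R_0$ be $t$-adically complete $T$-submodules with $V + W = \widehat R_0$, $V \cap t\widehat R_0 = tV$ and $W \cap t\widehat R_0 = tW$. Let $a,b,c$ be positive integers, let $\Omega \subset F_0^a \times F_0^b$ be an open neighborhood of $(0,0)$ and let $f : \Omega \to F_0^c$ be an analytic map. Let $f^a(x) = f(x,0)$ and $f^b(y) = f(0,y)$ (defined near $0$). Assume (i) $f(0,0)=0$ and (ii) the differentials $Df^a_0 : F_0^a \to F_0^c$ and $Df^b_0 : F_0^b \to F_0^c$ satisfy $$Df^a_0\big(V[1/t]^a\big) + Df^b_0\big(W[1/t]^b\big) = F_0^c.$$ Then there is a real number $\epsilon>0$ such that for every $y \in F_0^c$ with $|y| \le \epsilon$ there exist $v \in V^a$ and $w \in W^b$ with $(v,w) \in \Omega$ and $f(v,w) = y$.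
   Context: $t$-adically complete means $V \to \varprojlim_m V/t^{m+1}V$ is an isomorphism. On $F_0^c$ one uses the max norm $|y| = \max_i |y_i|$. *)

From HB Require Import structures.
From mathcomp Require Import all_boot all_order all_algebra.
From mathcomp Require Import reals.
Set Implicit Arguments. Unset Strict Implicit. Unset Printing Implicit Defensive.
Import Order.TTheory GRing.Theory Num.Theory.
Local Open Scope ring_scope.

Section Defs.
Variables (R : realType) (F : fieldType).

Definition is_subring (S : F -> Prop) : Prop :=
  [/\ S 0, S 1, (forall x, S x -> S (- x)),
      (forall x y, S x -> S y -> S (x + y)) &
      (forall x y, S x -> S y -> S (x * y))].

Definition is_subfield (S : F -> Prop) : Prop :=
  is_subring S /\ (forall x, S x -> x != 0 -> S x^-1).

Definition unit_of (S : F -> Prop) (u : F) : Prop := [/\ S u, u != 0 & S u^-1].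

Definition is_dvr_unif (S : F -> Prop) (t : F) : Prop :=
  [/\ is_subring S, S t, t != 0, ~ S t^-1 &
      forall x, S x -> x != 0 -> exists n : nat, exists u, unit_of S u /\ x = t ^+ n * u].

Definition is_submodule (T M : F -> Prop) : Prop :=
  [/\ M 0, (forall x y, M x -> M y -> M (x + y)) &
      (forall r x, T r -> M x -> M (r * x))].

(* t-adic completeness: M -> lim_m M / t^(m+1) M is bijective *)
Definition tadic_complete (M : F -> Prop) (t : F) : Prop :=
  (forall x, M x -> (forall m : nat, exists y, M y /\ x = t ^+ m.+1 * y) -> x = 0) /\
  (forall xs : nat -> F, (forall m, M (xs m)) ->
     (forall m, exists y, M y /\ xs m.+1 - xs m = t ^+ m.+1 * y) ->
     exists x, M x /\ forall m, exists y, M y /\ x - xs m = t ^+ m.+1 * y).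

Definition invert_t (M : F -> Prop) (t : F) (x : F) : Prop :=
  exists n : nat, exists v, M v /\ x = t ^- n * v.

Variable absv : F -> R.

Definition vnorm n (y : 'rV[F]_n) : R := \big[Num.max/0]_(i < n) absv (y ord0 i).

Definition has_sum (I : eqType) c (u : I -> 'rV[F]_c) (l : 'rV[F]_c) : Prop :=
  forall eps : R, 0 < eps -> exists S : seq I, forall S' : seq I,
    uniq S' -> {subset S <= S'} -> vnorm (\sum_(k <- S') u k - l) <= eps.

Definition monomial n (z : 'rV[F]_n) (k : {ffun 'I_n -> nat}) : F :=
  \prod_(i < n) z ord0 i ^+ k i.

Definition analytic_on n c (D : 'rV[F]_n -> Prop) (g : 'rV[F]_n -> 'rV[F]_c) : Prop :=
  forall p, D p -> exists r : R, 0 < r /\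
    exists coef : {ffun 'I_n -> nat} -> 'rV[F]_c,
      forall z, vnorm (z - p) < r ->
        D z /\ has_sum (fun k => monomial (z - p) k *: coef k) (g z).

Definition is_open n (D : 'rV[F]_n -> Prop) : Prop :=
  forall p, D p -> exists r : R, 0 < r /\ forall z, vnorm (z - p) < r -> D z.

Definition is_diff0 m c (D : 'rV[F]_m -> Prop) (g : 'rV[F]_m -> 'rV[F]_c)
  (A : 'M[F]_(m, c)) : Prop :=
  forall eps : R, 0 < eps -> exists delta : R, 0 < delta /\
    forall x, vnorm x < delta ->
      D x /\ vnorm (g x - g 0 - x *m A) <= eps * vnorm x.

End Defs.

From HB Require Import structures.
From mathcomp Require Import all_boot all_order all_algebra.
From mathcomp Require Import reals boolp.
From mathcomp Require Import lra ring zify.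
Set Implicit Arguments. Unset Strict Implicit. Unset Printing Implicit Defensive.
Import Order.TTheory GRing.Theory Num.Theory.
Local Open Scope ring_scope.

(* Analytic maps are strictly differentiable at 0 (the terms of degree >= 2 of the power
   series are Lipschitz with arbitrarily small constant near 0), and the strict
   derivative of f at 0 is G = col_mx Da Db.  Because V and W are t-adically complete and
   t-saturated in R0, the T-module P = V^a x W^b is closed under t-adic limits and under
   division by t inside R0.  Hypothesis (ii) gives for each y some N with t^N y in G(P);
   a Baire category argument in R0^c makes N uniform: some t^K maps the unit ball into
   the closure of G(P).  For small y, the Newton iteration u_(k+1) = u_k + d_k, with
   d_k in t^(k + j + 1) P correcting the residual y - f(u_k) through G, then converges
   in P to a solution of f(u) = y. *)

Ltac row_ring := apply/rowP => ?; rewrite !mxE; ring.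

Lemma subr_trans (V : zmodType) (y x z : V) : x - z = (x - y) + (y - z).
Proof. by rewrite addrA subrK. Qed.

Lemma bernoulli (R : realDomainType) (x : R) (m : nat) :
  0 <= x -> 1 + m%:R * x <= (1 + x) ^+ m.
Proof.
move=> x0; elim: m => [|m IH]; first by rewrite mul0r addr0 expr0.
rewrite exprSr -natr1.
have hm : 0 <= m%:R :> R by [].
have hx : 0 <= m%:R * x * x by rewrite !mulr_ge0.
apply: le_trans (ler_wpM2r _ IH); nra.
Qed.

Section Valuation.
Variables (R : realType) (alpha : R).
Hypothesis alpha_gt1 : 1 < alpha.

Definition rad (m : nat) : R := (alpha ^+ m)^-1.

Lemma alpha_gt0 : 0 < alpha.
Proof. exact: lt_trans ltr01 alpha_gt1. Qed.

Lemma rad_gt0 m : 0 < rad m.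
Proof. by rewrite invr_gt0 exprn_gt0 // alpha_gt0. Qed.

Lemma rad_ge0 m : 0 <= rad m.
Proof. exact/ltW/rad_gt0. Qed.

Lemma radD m n : rad (m + n) = rad m * rad n.
Proof. by rewrite /rad exprD invfM. Qed.

Lemma rad_le m n : (m <= n)%N -> rad n <= rad m.
Proof.
move=> mn; rewrite lef_pV2 ?posrE ?exprn_gt0 ?alpha_gt0 //.
by rewrite ler_eXn2l // ltW.
Qed.

Lemma rad_le1 m : rad m <= 1.
Proof. by rewrite -[1]invr1 -(expr0 alpha) rad_le. Qed.

Lemma rad_small (e : R) : 0 < e -> exists m, rad m < e.
Proof.
move=> e0; have a1 : 0 < alpha - 1 by rewrite subr_gt0.
have x0 : 0 <= (e * (alpha - 1))^-1 by rewrite invr_ge0 ltW // mulr_gt0.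
exists (Num.Def.archi_bound (e * (alpha - 1))^-1).
have := archi_boundP x0; set m := Num.Def.archi_bound _ => hm.
have key : e^-1 < alpha ^+ m.
  have := bernoulli m (ltW a1); rewrite subrKC; apply: lt_le_trans.
  by apply: ltr_wpDl; rewrite // -ltr_pdivrMr // -invfM.
by rewrite /rad -[e]invrK ltf_pV2 ?posrE ?exprn_gt0 ?alpha_gt0 ?invr_gt0 //.
Qed.

Variables (F : fieldType) (absv : F -> R) (t : F) (R0 : F -> Prop).
Hypotheses (hR0 : is_dvr_unif R0 t)
  (hR0frac : forall x : F, x != 0 -> exists n : int, exists u, unit_of R0 u /\ x = t ^ n * u)
  (habs0 : absv 0 = 0)
  (habs : forall (n : int) (u : F), unit_of R0 u -> absv (t ^ n * u) = alpha ^ (- n)).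

Lemma t_neq0 : t != 0. Proof. by case: hR0. Qed.

Lemma R0_subring : is_subring R0. Proof. by case: hR0. Qed.

Lemma R0_1 : R0 1. Proof. by case: R0_subring. Qed.

Lemma R0_D x y : R0 x -> R0 y -> R0 (x + y).
Proof. by case: R0_subring => _ _ _ hD _; apply: hD. Qed.

Lemma R0_M x y : R0 x -> R0 y -> R0 (x * y).
Proof. by case: R0_subring => _ _ _ _ hM; apply: hM. Qed.

Lemma R0_tX n : R0 (t ^+ n).
Proof.
elim: n => [|n IH]; first by rewrite expr0; apply: R0_1.
by rewrite exprS; apply: R0_M => //; case: hR0.
Qed.

Lemma unit_ofM u v : unit_of R0 u -> unit_of R0 v -> unit_of R0 (u * v).
Proof.
case=> u1 u2 u3 [v1 v2 v3]; split; rewrite ?mulf_neq0 //.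
  exact: R0_M.
by rewrite invfM; apply: R0_M.
Qed.

Lemma unit_of1 : unit_of R0 1.
Proof. by split; rewrite ?invr1 ?oner_neq0 //; apply: R0_1. Qed.

Lemma absv_tX_unit n u : unit_of R0 u -> absv (t ^+ n * u) = rad n.
Proof. by move=> hu; rewrite exprnP habs // -exprnN. Qed.

Lemma absvX n : absv (t ^+ n) = rad n.
Proof. by rewrite -[t ^+ n]mulr1 absv_tX_unit //; apply: unit_of1. Qed.

Lemma absv1 : absv 1 = 1.
Proof. by rewrite -(expr0 t) absvX /rad expr0 invr1. Qed.

Lemma absv_gt0 x : x != 0 -> 0 < absv x.
Proof.
by move=> /hR0frac [n [u [hu ->]]]; rewrite habs // exprz_gt0 // alpha_gt0.
Qed.

Lemma absv_ge0 x : 0 <= absv x.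
Proof. by have [->|/absv_gt0/ltW//] := eqVneq x 0; rewrite habs0. Qed.

Lemma absv_eq0 x : absv x = 0 -> x = 0.
Proof. by apply: contra_eq => /absv_gt0/lt0r_neq0. Qed.

Lemma absvM x y : absv (x * y) = absv x * absv y.
Proof.
have [->|/hR0frac [n [u [hu ->]]]] := eqVneq x 0; first by rewrite mul0r habs0 mul0r.
have [->|/hR0frac [m [v [hv ->]]]] := eqVneq y 0; first by rewrite mulr0 habs0 mulr0.
have tu : t \is a GRing.unit by rewrite unitfE t_neq0.
have au : alpha \is a GRing.unit by rewrite unitfE lt0r_neq0 ?alpha_gt0.
rewrite mulrACA -exprzDr // !habs ?opprD ?exprzDr //; exact: unit_ofM.
Qed.

Lemma absvV x : absv x^-1 = (absv x)^-1.
Proof.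
have [->|x0] := eqVneq x 0; first by rewrite invr0 habs0 invr0.
apply: (mulfI (lt0r_neq0 (absv_gt0 x0))).
by rewrite -absvM !divff ?absv1 // lt0r_neq0 // absv_gt0.
Qed.

Lemma absvN x : absv (- x) = absv x.
Proof.
have h1 : absv (-1) ^+ 2 = 1 by rewrite expr2 -absvM mulN1r opprK absv1.
have : absv (-1) = 1.
  by apply/eqP; rewrite -(@eqrXn2 _ 2) ?absv_ge0 // h1 expr1n.
by rewrite -[- x]mulN1r absvM => ->; rewrite mul1r.
Qed.

Lemma absv_le1 x : R0 x -> absv x <= 1.
Proof.
have [->|x0] := eqVneq x 0; first by rewrite habs0.
by case: hR0 => _ _ _ _ h /h /(_ x0) [n [u [hu ->]]]; rewrite absv_tX_unit ?rad_le1.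
Qed.

Lemma absv_le1_R0 x : absv x <= 1 -> R0 x.
Proof.
have [->|/hR0frac [[n|n] [u [hu ->]]]] := eqVneq x 0.
- by move=> _; case: R0_subring.
- by move=> _; rewrite -exprnP; apply: R0_M; [apply: R0_tX | case: hu].
by rewrite habs // NegzE opprK -exprnP leNgt exprn_egt1.
Qed.

(* For |y| <= |x| the quotient y / x lies in R0, hence so does 1 + y / x. *)
Lemma absvD_le x y (B : R) : absv x <= B -> absv y <= B -> absv (x + y) <= B.
Proof.
wlog le_yx : x y / absv y <= absv x.
  move=> hw hx hy; have [/hw|/ltW/hw] := leP (absv y) (absv x); first exact.
  by rewrite addrC; apply.
move=> hx _; have [x0|x0] := eqVneq x 0.
  by move: hx le_yx; rewrite x0 add0r => hx /le_trans; apply.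
have -> : x + y = x * (1 + y / x) by rewrite mulrDr mulr1 mulrC divfK.
rewrite absvM; apply: le_trans hx; rewrite -[X in _ <= X]mulr1 ler_wpM2l ?absv_ge0 //.
apply/absv_le1/R0_D; first exact: R0_1.
by apply: absv_le1_R0; rewrite absvM absvV ler_pdivrMr ?mul1r ?absv_gt0.
Qed.

Lemma absvXn x k : absv (x ^+ k) = absv x ^+ k.
Proof. by elim: k => [|k IH]; rewrite ?expr0 ?absv1 // !exprS absvM IH. Qed.

Lemma absv_le_rad x m : absv x <= rad m -> exists r, R0 r /\ x = t ^+ m * r.
Proof.
move=> h; exists (x / t ^+ m); split; last by rewrite mulrC divfK ?expf_neq0 ?t_neq0.
by apply: absv_le1_R0; rewrite absvM absvV absvX ler_pdivrMr ?rad_gt0 ?mul1r.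
Qed.

Local Notation vn := (vnorm absv).

Lemma vnorm_ge0 n (y : 'rV[F]_n) : 0 <= vn y.
Proof.
apply: (big_ind (fun x => 0 <= x)) => // [x z hx hz|i _]; first by rewrite le_max hx.
exact: absv_ge0.
Qed.

Lemma absv_le_vnorm n (y : 'rV[F]_n) i : absv (y 0 i) <= vn y.
Proof. by rewrite /vnorm (bigD1 i) //= le_max lexx. Qed.

Lemma vnorm_le n (y : 'rV[F]_n) (B : R) :
  0 <= B -> (forall i, absv (y 0 i) <= B) -> vn y <= B.
Proof.
move=> B0 h; apply: (big_ind (fun x => x <= B)) => // x z hx hz.
by rewrite ge_max hx.
Qed.

Lemma vnorm0 n : vn (0 : 'rV[F]_n) = 0.
Proof.
by apply/le_anti; rewrite vnorm_ge0 andbT vnorm_le // => i; rewrite mxE habs0.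
Qed.

Lemma vnorm_eq0 n (y : 'rV[F]_n) : vn y <= 0 -> y = 0.
Proof.
move=> h; apply/rowP => i; rewrite mxE; apply: absv_eq0.
by apply/le_anti; rewrite absv_ge0 andbT (le_trans (absv_le_vnorm _ _)).
Qed.

Lemma vnormN n (y : 'rV[F]_n) : vn (- y) = vn y.
Proof.
apply/le_anti/andP; split; apply: vnorm_le; rewrite ?vnorm_ge0 // => i.
  by rewrite mxE absvN absv_le_vnorm.
by have := absv_le_vnorm (- y) i; rewrite mxE absvN.
Qed.

Lemma vnormD_le n (x y : 'rV[F]_n) (B : R) : vn x <= B -> vn y <= B -> vn (x + y) <= B.
Proof.
move=> hx hy; apply: vnorm_le => [|i]; first exact: le_trans (vnorm_ge0 _) hx.
rewrite mxE; apply: absvD_le.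
  exact: le_trans (absv_le_vnorm _ _) hx.
exact: le_trans (absv_le_vnorm _ _) hy.
Qed.

Lemma vnormB_le n (x y : 'rV[F]_n) (B : R) : vn x <= B -> vn y <= B -> vn (x - y) <= B.
Proof. by move=> hx hy; apply: vnormD_le; rewrite ?vnormN. Qed.

Lemma vnorm_sum_le n (I : Type) (s : seq I) (P : pred I) (G : I -> 'rV[F]_n) (B : R) :
  0 <= B -> (forall i, P i -> vn (G i) <= B) -> vn (\sum_(i <- s | P i) G i) <= B.
Proof.
move=> B0 h; apply: (big_ind (fun x => vn x <= B)) => //; first by rewrite vnorm0.
by move=> x y; apply: vnormD_le.
Qed.

Lemma vnormZ n (s : F) (y : 'rV[F]_n) : vn (s *: y) = absv s * vn y.
Proof.
have le_vnormZ s' (y' : 'rV[F]_n) : vn (s' *: y') <= absv s' * vn y'.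
  apply: vnorm_le => [|i]; first by rewrite mulr_ge0 ?absv_ge0 ?vnorm_ge0.
  by rewrite mxE absvM ler_wpM2l ?absv_ge0 ?absv_le_vnorm.
apply/le_anti; rewrite le_vnormZ /=.
have [->|s0] := eqVneq s 0; first by rewrite habs0 mul0r vnorm_ge0.
have := le_vnormZ s^-1 (s *: y); rewrite scalerA mulVf // scale1r absvV.
by rewrite ler_pdivlMl ?absv_gt0.
Qed.

Lemma vnorm_tZ n m (y : 'rV[F]_n) : vn (t ^+ m *: y) = rad m * vn y.
Proof. by rewrite vnormZ absvX. Qed.

Lemma vnorm_le_rad n (y : 'rV[F]_n) m :
  vn y <= rad m -> exists r : 'rV[F]_n, (forall i, R0 (r 0 i)) /\ y = t ^+ m *: r.
Proof.
move=> h; exists ((t ^+ m)^-1 *: y); split; last first.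
  by rewrite scalerA divff ?scale1r // expf_neq0 // t_neq0.
move=> i; apply: absv_le1_R0; rewrite mxE absvM absvV absvX.
by rewrite ler_pdivrMl ?rad_gt0 // mulr1 (le_trans (absv_le_vnorm _ _)).
Qed.

Lemma R0_vnorm_le1 n (r : 'rV[F]_n) : (forall i, R0 (r 0 i)) -> vn r <= 1.
Proof. by move=> h; apply: vnorm_le => // i; apply: absv_le1. Qed.

Lemma vnorm_mulmx_le m n (x : 'rV[F]_m) (A : 'M[F]_(m, n)) :
  vn (x *m A) <= vn (mxvec A) * vn x.
Proof.
have C0 : 0 <= vn (mxvec A) * vn x by rewrite mulr_ge0 ?vnorm_ge0.
apply: vnorm_le => // j; rewrite mxE; apply: (big_ind (fun y => absv y <= _)) => //.
- by rewrite habs0.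
- by move=> y z; apply: absvD_le.
move=> i _; rewrite absvM mulrC ler_pM ?absv_ge0 ?absv_le_vnorm //.
by rewrite -(mxvecE A) absv_le_vnorm.
Qed.

Lemma vnorm_row_mx_le m n (x : 'rV[F]_m) (y : 'rV[F]_n) (B : R) :
  vn x <= B -> vn y <= B -> vn (row_mx x y) <= B.
Proof.
move=> hx hy; apply: vnorm_le => [|i]; first exact: le_trans (vnorm_ge0 _) hx.
rewrite mxE; case: splitP => j _.
  exact: le_trans (absv_le_vnorm _ _) hx.
exact: le_trans (absv_le_vnorm _ _) hy.
Qed.

Lemma has_sumB (I : eqType) c (u v : I -> 'rV[F]_c) l1 l2 :
  has_sum absv u l1 -> has_sum absv v l2 -> has_sum absv (fun k => u k - v k) (l1 - l2).
Proof.
move=> hu hv e e0; have [S1 h1] := hu e e0; have [S2 h2] := hv e e0.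
exists (S1 ++ S2) => S uS sS; rewrite sumrB.
have -> : \sum_(k <- S) u k - \sum_(k <- S) v k - (l1 - l2) =
          (\sum_(k <- S) u k - l1) - (\sum_(k <- S) v k - l2) by row_ring.
apply: vnormB_le; [apply: h1 | apply: h2] => // x hx; apply: sS.
  by rewrite mem_cat hx.
by rewrite mem_cat hx orbT.
Qed.

Lemma has_sum_bounded (I : eqType) c (u : I -> 'rV[F]_c) l :
  has_sum absv u l -> exists M, 0 <= M /\ forall k, vn (u k) <= M.
Proof.
move=> hu; have [S hS] := hu 1 ltr01; set S1 := undup S.
have sum_ge0 : 0 <= \sum_(k <- S1) vn (u k) by rewrite sumr_ge0 // => i _; apply: vnorm_ge0.
exists (1 + \sum_(k <- S1) vn (u k)); split => [|k]; first by rewrite addr_ge0.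
have [kS|kS] := boolP (k \in S).
  rewrite (bigD1_seq k _ (undup_uniq S)) ?mem_undup //= addrCA lerDl addr_ge0 //.
  by rewrite sumr_ge0 // => i _; apply: vnorm_ge0.
have hS1 : vn (\sum_(i <- S1) u i - l) <= 1.
  by apply: hS => [|x]; rewrite ?undup_uniq ?mem_undup.
have hkS1 : vn (\sum_(i <- k :: S1) u i - l) <= 1.
  apply: hS => [|x]; first by rewrite /= mem_undup kS undup_uniq.
  by rewrite inE mem_undup => ->; rewrite orbT.
rewrite big_cons in hkS1; apply: le_trans (_ : 1 <= _); last by rewrite lerDl.
have -> : u k = (u k + \sum_(i <- S1) u i - l) - (\sum_(i <- S1) u i - l) by row_ring.
exact: vnormB_le.
Qed.

Lemma has_sum_le (I : eqType) c (u : I -> 'rV[F]_c) l (X : 'rV[F]_c) (B : R) (S0 : seq I) :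
  has_sum absv u l -> 0 <= B ->
  (forall S, uniq S -> {subset S0 <= S} -> vn (\sum_(k <- S) u k - X) <= B) ->
  vn (l - X) <= B.
Proof.
move=> hu B0 hS0; apply/ler_addgt0Pr => e e0.
have [S hS] := hu e e0; set S' := undup (S ++ S0).
have uS' : uniq S' := undup_uniq _.
rewrite (subr_trans (\sum_(k <- S') u k)); apply: vnormD_le.
  rewrite -vnormN opprB; apply: le_trans (hS _ uS' _) _; last exact: ler_wpDl B0 (lexx e).
  by move=> x hx; rewrite mem_undup mem_cat hx.
apply: le_trans (hS0 _ uS' _) _; last exact: ler_wpDr (ltW e0) (lexx B).
by move=> x hx; rewrite mem_undup mem_cat hx orbT.
Qed.

Definition mdeg n (k : {ffun 'I_n -> nat}) : nat := \sum_(i < n) k i.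

Definition mdelta n (i : 'I_n) : {ffun 'I_n -> nat} := [ffun j => nat_of_bool (j == i)].

Lemma mdelta_inj n : injective (@mdelta n).
Proof.
move=> i i' /(congr1 (fun k : {ffun 'I_n -> nat} => k i)).
by rewrite !ffunE eqxx; case: eqP.
Qed.

Lemma monomial_mdelta n (z : 'rV[F]_n) i : monomial z (mdelta i) = z 0 i.
Proof.
rewrite /monomial (bigD1 i) //= big1 ?mulr1; first by rewrite ffunE eqxx expr1.
by move=> j hj; rewrite ffunE (negPf hj) expr0.
Qed.

Lemma mdeg_ge n (k : {ffun 'I_n -> nat}) i : (k i <= mdeg k)%N.
Proof. by rewrite /mdeg (bigD1 i) //= leq_addr. Qed.

Lemma monomial_mdeg0 n (z : 'rV[F]_n) k : mdeg k = 0%N -> monomial z k = 1.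
Proof.
move=> h; rewrite /monomial big1 // => i _.
by have := mdeg_ge k i; rewrite h leqn0 => /eqP ->; rewrite expr0.
Qed.

Lemma mdeg1P n (k : {ffun 'I_n -> nat}) : mdeg k = 1%N -> exists i, k = mdelta i.
Proof.
move=> h; have [i ki] : exists i, k i != 0%N.
  apply/existsP; apply: contraT; rewrite negb_exists => /forallP k0.
  by move: h; rewrite /mdeg big1 // => j _; apply/eqP; rewrite -[_ == _]negbK k0.
move: h; rewrite /mdeg (bigD1 i) //=; set S := (\sum_(_ < n | _) _)%N => hs.
exists i; apply/ffunP => j; rewrite ffunE.
have [->|ji] := eqVneq j i; first by rewrite /=; lia.
have : (k j <= S)%N by rewrite /S (bigD1 j) //= leq_addr.
by rewrite /=; lia.
Qed.

Lemma absv_monomial n (z : 'rV[F]_n) k (rho : R) :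
  (forall i, absv (z 0 i) = rho) -> absv (monomial z k) = rho ^+ mdeg k.
Proof.
move=> hz; rewrite /monomial /mdeg; elim: (index_enum 'I_n) => [|i s IH].
  by rewrite !big_nil absv1 expr0.
by rewrite !big_cons absvM absvXn hz IH exprD.
Qed.

(* The bounds have the shape [d * de ^+ k / de] so that they multiply along products. *)
Section MonomialLipschitz.
Variables (d de : R).
Hypotheses (d0 : 0 <= d) (de0 : 0 < de).

Lemma absv_exprB_le (x y : F) k : absv x <= de -> absv y <= de ->
  absv (x - y) <= d -> absv (x ^+ k - y ^+ k) <= d * de ^+ k / de.
Proof.
move=> hx hy hd; elim: k => [|k IH]; first by rewrite !expr0 subrr habs0 mulr1 divr_ge0 // ltW.
have -> : x ^+ k.+1 - y ^+ k.+1 = x * (x ^+ k - y ^+ k) + (x - y) * y ^+ k.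
  by rewrite !exprS; ring.
have -> : d * de ^+ k.+1 / de = d * de ^+ k by rewrite exprS; field; apply: lt0r_neq0.
apply: absvD_le; rewrite absvM.
  rewrite mulrC -[d * _](mulfK (lt0r_neq0 de0)) mulrAC.
  by apply: ler_pM; rewrite ?absv_ge0.
rewrite absvXn; apply: ler_pM; [exact: absv_ge0 | exact: exprn_ge0 (absv_ge0 _) | exact: hd |].
by apply: lerXn2r; rewrite ?nnegrE ?absv_ge0 // ltW.
Qed.

Lemma absv_prodB_le (I : Type) (s : seq I) (X Y : I -> F) (kk : I -> nat) :
  (forall i, absv (X i) <= de ^+ kk i) -> (forall i, absv (Y i) <= de ^+ kk i) ->
  (forall i, absv (X i - Y i) <= d * de ^+ kk i / de) ->
  absv (\prod_(i <- s) X i - \prod_(i <- s) Y i) <= d * de ^+ (\sum_(i <- s) kk i) / de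
  /\ absv (\prod_(i <- s) Y i) <= de ^+ (\sum_(i <- s) kk i).
Proof.
move=> hX hY hXY; elim: s => [|i s [IH1 IH2]].
  by rewrite !big_nil subrr habs0 absv1 expr0 mulr1 lexx divr_ge0 // ltW.
rewrite !big_cons exprD absvM; split; last by rewrite ler_pM ?absv_ge0.
have -> : X i * \prod_(j <- s) X j - Y i * \prod_(j <- s) Y j =
  X i * (\prod_(j <- s) X j - \prod_(j <- s) Y j) + (X i - Y i) * \prod_(j <- s) Y j.
  by ring.
set S := (\sum_(j <- s) kk j)%N.
apply: absvD_le; rewrite absvM.
  have -> : d * (de ^+ kk i * de ^+ S) / de = de ^+ kk i * (d * de ^+ S / de) by ring.
  by apply: ler_pM; rewrite ?absv_ge0.
have -> : d * (de ^+ kk i * de ^+ S) / de = (d * de ^+ kk i / de) * de ^+ S by ring.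
by apply: ler_pM; rewrite ?absv_ge0.
Qed.

End MonomialLipschitz.

Lemma monomialB_le n (p q : 'rV[F]_n) k (de : R) : 0 < de -> vn p <= de -> vn q <= de ->
  absv (monomial p k - monomial q k) <= vn (p - q) * de ^+ mdeg k / de.
Proof.
move=> de0 hp hq.
have hle (z : 'rV[F]_n) i : vn z <= de -> absv (z 0 i ^+ k i) <= de ^+ k i.
  move=> hz; rewrite absvXn; apply: lerXn2r; rewrite ?nnegrE ?absv_ge0 ?(ltW de0) //.
  exact: le_trans (absv_le_vnorm _ _) hz.
have hpq i : absv (p 0 i ^+ k i - q 0 i ^+ k i) <= vn (p - q) * de ^+ k i / de.
  apply: absv_exprB_le; rewrite ?vnorm_ge0 ?(le_trans (absv_le_vnorm _ _)) //.
  by have := absv_le_vnorm (p - q) i; rewrite !mxE.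
by case: (absv_prodB_le (vnorm_ge0 (p - q)) de0 (index_enum 'I_n) (hle p ^~ hp) (hle q ^~ hq) hpq).
Qed.

Lemma coef_decay_le (C M de rho e : R) k : 0 <= C -> 0 < de -> de <= rho ->
  C * rho ^+ k.+2 <= M -> M * de <= e * rho ^+ 2 -> C * de ^+ k.+1 <= e.
Proof.
move=> C0 de0 de_rho hC hM; have rho0 : 0 < rho := lt_le_trans de0 de_rho.
rewrite -(ler_pM2r (exprn_gt0 2 rho0)); apply: le_trans hM.
have -> : C * de ^+ k.+1 * rho ^+ 2 = C * de ^+ k * rho ^+ 2 * de by rewrite exprSr; ring.
rewrite ler_pM2r //; apply: le_trans hC.
rewrite -[k.+2]addn2 exprD mulrA; apply: ler_wpM2r; first exact: exprn_ge0 (ltW rho0).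
by apply: ler_wpM2l => //; apply: lerXn2r; rewrite // nnegrE ltW.
Qed.

Definition strict_diff0 n c (D : 'rV[F]_n -> Prop) (g : 'rV[F]_n -> 'rV[F]_c)
    (G : 'M[F]_(n, c)) :=
  forall e, 0 < e -> exists j, forall p q, vn p <= rad j -> vn q <= rad j ->
    D p /\ vn (g p - g q - (p - q) *m G) <= e * vn (p - q).

Definition linear_coef n c (coef : {ffun 'I_n -> nat} -> 'rV[F]_c) : 'M[F]_(n, c) :=
  \matrix_(i, j) coef (mdelta i) 0 j.

Section PowerSeries.
Variables (n c : nat) (coef : {ffun 'I_n -> nat} -> 'rV[F]_c).

Local Notation deltas := (map (@mdelta n) (index_enum 'I_n)).

Lemma cauchy_coef_bound (z : 'rV[F]_n) (rho : R) l : (forall i, absv (z 0 i) = rho) ->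
  has_sum absv (fun k => monomial z k *: coef k) l ->
  exists M, 0 <= M /\ forall k, vn (coef k) * rho ^+ mdeg k <= M.
Proof.
move=> hz /has_sum_bounded [M [M0 hM]]; exists M; split=> // k.
by rewrite mulrC -(absv_monomial k hz) -vnormZ.
Qed.

Lemma sum_mdelta_terms (p q : 'rV[F]_n) (S : seq {ffun 'I_n -> nat}) :
  uniq S -> {subset deltas <= S} ->
  \sum_(k <- S | k \in deltas) (monomial p k *: coef k - monomial q k *: coef k) =
    (p - q) *m linear_coef coef.
Proof.
move=> uS sub; rewrite -big_filter (perm_big deltas); last first.
  apply: uniq_perm; rewrite ?filter_uniq ?map_inj_uniq ?index_enum_uniq //.
    exact: mdelta_inj.
  by move=> x; rewrite mem_filter; apply/andP/idP => [[]//|hx]; split=> //; apply: sub.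
rewrite big_map mulmx_sum_row; apply: eq_bigr => i _.
rewrite !monomial_mdelta -scalerBl; congr (_ *: _); first by rewrite !mxE.
by apply/rowP => j; rewrite !mxE.
Qed.

Section Estimates.
Variables (M rho de e : R) (p q : 'rV[F]_n).
Hypotheses (hM : forall k, vn (coef k) * rho ^+ mdeg k <= M)
  (de0 : 0 < de) (de_rho : de <= rho) (hMde : M * de <= e * rho ^+ 2)
  (hp : vn p <= de) (hq : vn q <= de).

Lemma higher_term_le k : (1 < mdeg k)%N ->
  vn ((monomial p k - monomial q k) *: coef k) <= e * vn (p - q).
Proof.
case hk: (mdeg k) => [|[|d]] // _.
have hmono : absv (monomial p k - monomial q k) <= vn (p - q) * de ^+ d.+1.
  have -> : vn (p - q) * de ^+ d.+1 = vn (p - q) * de ^+ d.+2 / de.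
    by rewrite [de ^+ d.+2]exprS; field; apply: lt0r_neq0.
  by rewrite -hk; apply: monomialB_le.
rewrite vnormZ [e * _]mulrC; apply: le_trans (ler_wpM2r (vnorm_ge0 _) hmono) _.
rewrite mulrAC -mulrA ler_wpM2l ?vnorm_ge0 //.
by apply: coef_decay_le (vnorm_ge0 _) de0 de_rho _ hMde; rewrite -hk.
Qed.

Lemma power_series_strictB_le gp gq : 0 < e ->
  has_sum absv (fun k => monomial p k *: coef k) gp ->
  has_sum absv (fun k => monomial q k *: coef k) gq ->
  vn (gp - gq - (p - q) *m linear_coef coef) <= e * vn (p - q).
Proof.
move=> e0 hsp hsq.
have epq0 : 0 <= e * vn (p - q) by rewrite mulr_ge0 ?vnorm_ge0 ?ltW.
apply: (has_sum_le (S0 := deltas) (has_sumB hsp hsq) epq0) => S uS sub.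
rewrite (bigID (mem deltas)) /= (sum_mdelta_terms _ _ uS sub) [_ *m _ + _]addrC addrK.
apply: vnorm_sum_le => // k kS0; rewrite -scalerBl.
case hk: (mdeg k) => [|[|d]].
- by rewrite !monomial_mdeg0 // subrr scale0r vnorm0.
- by have [i ki] := mdeg1P hk; rewrite ki map_f ?mem_index_enum in kS0.
by apply: higher_term_le; rewrite hk.
Qed.

End Estimates.
End PowerSeries.

Lemma analytic_strict_diff0 n c (D : 'rV[F]_n -> Prop) (g : 'rV[F]_n -> 'rV[F]_c) :
  D 0 -> analytic_on absv D g -> exists G, strict_diff0 D g G.
Proof.
move=> hD0 /(_ 0 hD0) [r [r0 [coef hcoef]]].
have [m0 hm0] := rad_small r0; set rho := rad m0 in hm0.
have in_ball (z : 'rV[F]_n) : vn z <= rho -> vn (z - 0) < r.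
  by rewrite subr0 => hz; apply: le_lt_trans hm0.
have [M [M0 hM]] : exists M, 0 <= M /\ forall k, vn (coef k) * rho ^+ mdeg k <= M.
  pose z0 : 'rV[F]_n := const_mx (t ^+ m0).
  have hz0 i : absv (z0 0 i) = rho by rewrite mxE absvX.
  have hz0_le : vn z0 <= rho by apply: vnorm_le => [|i]; rewrite ?rad_ge0 ?hz0.
  have [_] := hcoef z0 (in_ball _ hz0_le).
  by rewrite subr0; apply: cauchy_coef_bound hz0.
exists (linear_coef coef) => e e0.
have erho0 : 0 < e * rho ^+ 2 / (M + 1).
  by rewrite divr_gt0 ?mulr_gt0 ?exprn_gt0 ?rad_gt0 ?ltr_wpDl.
have [j1 hj1] := rad_small erho0.
(* On the ball of radius de the terms of degree >= 2 are e-Lipschitz. *)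
exists (j1 + m0)%N => p q hp hq; set de := rad (j1 + m0) in hp hq.
have de_rho : de <= rho by apply: rad_le; rewrite leq_addl.
have hMde : M * de <= e * rho ^+ 2.
  have de_j1 : de <= rad j1 by apply: rad_le; rewrite leq_addr.
  have : (M + 1) * de < e * rho ^+ 2.
    by rewrite mulrC -ltr_pdivlMr ?ltr_wpDl //; apply: le_lt_trans de_j1 hj1.
  by move/ltW; apply: le_trans; rewrite ler_wpM2r ?rad_ge0 // lerDl.
have [Dp hsp] := hcoef p (in_ball p (le_trans hp de_rho)).
have [_ hsq] := hcoef q (in_ball q (le_trans hq de_rho)).
rewrite !subr0 in hsp hsq; split=> //.
exact: power_series_strictB_le hM (rad_gt0 _) de_rho hMde hp hq _ _ e0 hsp hsq.
Qed.

Lemma vnorm_telescope n (zs : nat -> 'rV[F]_n) (m : nat -> nat) :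
  {homo m : i j / (i <= j)%N} -> (forall k, vn (zs k.+1 - zs k) <= rad (m k)) ->
  forall k i, vn (zs (k + i)%N - zs k) <= rad (m k).
Proof.
move=> m_mono hzs k; elim=> [|i IH]; first by rewrite addn0 subrr vnorm0 rad_ge0.
rewrite addnS (subr_trans (zs (k + i)%N)).
apply: vnormD_le IH; apply: le_trans (hzs _) _.
by apply/rad_le/m_mono; rewrite leq_addr.
Qed.

Lemma vnorm_delta_le1 m (i : 'I_m) : vn ('e_i : 'rV[F]_m) <= 1.
Proof.
apply: R0_vnorm_le1 => l; rewrite mxE; case: (_ && _); first exact: R0_1.
by case: R0_subring.
Qed.

Lemma vnorm_rad_eq0 n (x : 'rV[F]_n) (C : R) : 0 <= C ->
  (forall k, vn x <= C * rad k) -> x = 0.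
Proof.
move=> C0 hx; apply: vnorm_eq0; apply/ler_addgt0Pr => e e0; rewrite add0r.
have C1 : 0 < C + 1 by rewrite ltr_wpDl.
have [k hk] := rad_small (divr_gt0 e0 C1).
apply: le_trans (hx k) (le_trans (_ : _ <= (C + 1) * rad k) _).
  by rewrite ler_wpM2r ?rad_ge0 ?lerDl.
by rewrite mulrC -ler_pdivlMr // ltW.
Qed.

Lemma diff0_unique m c (Dg : 'rV[F]_m -> Prop) (g : 'rV[F]_m -> 'rV[F]_c)
    (A B : 'M[F]_(m, c)) :
  is_diff0 absv Dg g A ->
  (forall e, 0 < e -> exists j, forall x, vn x <= rad j ->
     vn (g x - g 0 - x *m B) <= e * vn x) ->
  A = B.
Proof.
move=> hA hB; apply/row_matrixP => i; apply/eqP; rewrite -subr_eq0; apply/eqP.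
apply: vnorm_eq0; apply/ler_addgt0Pr => e e0; rewrite add0r.
have [d [d0 hd]] := hA e e0; have [j hj] := hB e e0; have [k hk] := rad_small d0.
pose x : 'rV[F]_m := t ^+ (j + k) *: 'e_i.
have xM (C : 'M[F]_(m, c)) : x *m C = t ^+ (j + k) *: row i C.
  by rewrite -scalemxAl -rowE.
have hx : vn x <= rad (j + k).
  by rewrite vnorm_tZ -[X in _ <= X]mulr1 ler_wpM2l ?rad_ge0 ?vnorm_delta_le1.
have [_ hxA] := hd x (le_lt_trans hx (le_lt_trans (rad_le (leq_addl j k)) hk)).
have hxB := hj x (le_trans hx (rad_le (leq_addr k j))).
have : vn (x *m A - x *m B) <= e * vn x.
  have -> : x *m A - x *m B = (g x - g 0 - x *m B) - (g x - g 0 - x *m A) by row_ring.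
  exact: vnormB_le.
rewrite !xM -scalerBr vnorm_tZ => /le_trans/(_ (ler_wpM2l (ltW e0) hx)).
by rewrite mulrC ler_pM2r ?rad_gt0.
Qed.

Lemma strict_diff0_restrict m n c (D : 'rV[F]_n -> Prop) (g : 'rV[F]_n -> 'rV[F]_c)
    (G : 'M[F]_(n, c)) (E : 'M[F]_(m, n)) (Dh : 'rV[F]_m -> Prop) (h : 'rV[F]_m -> 'rV[F]_c)
    (A : 'M[F]_(m, c)) :
  (forall x, vn (x *m E) <= vn x) -> (forall x, h x = g (x *m E)) ->
  strict_diff0 D g G -> is_diff0 absv Dh h A -> A = E *m G.
Proof.
move=> hE hgh hG hA; apply: diff0_unique hA _ => e e0.
have [j hj] := hG e e0; exists j => x hx.
have hxE : vn (x *m E) <= rad j := le_trans (hE x) hx.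
have h0 : vn (0 : 'rV[F]_n) <= rad j by rewrite vnorm0 rad_ge0.
have [_] := hj _ _ hxE h0.
rewrite !hgh mul0mx subr0 mulmxA => /le_trans; apply.
by apply: ler_wpM2l => //; apply: ltW.
Qed.

Lemma strict_diff0_block a b c (D : 'rV[F]_(a + b) -> Prop)
    (f : 'rV[F]_a -> 'rV[F]_b -> 'rV[F]_c) (G : 'M[F]_(a + b, c))
    (Oa : 'rV[F]_a -> Prop) (Ob : 'rV[F]_b -> Prop) (Da : 'M[F]_(a, c)) (Db : 'M[F]_(b, c)) :
  strict_diff0 D (fun z => f (lsubmx z) (rsubmx z)) G ->
  is_diff0 absv Oa (fun x => f x 0) Da -> is_diff0 absv Ob (fun y => f 0 y) Db ->
  G = col_mx Da Db.
Proof.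
move=> hG hDa hDb.
have -> : Da = row_mx 1%:M 0 *m G.
  apply: strict_diff0_restrict hG hDa => x; rewrite mul_mx_row mulmx1 mulmx0.
    by apply: vnorm_row_mx_le; rewrite ?vnorm0 ?vnorm_ge0.
  by rewrite row_mxKl row_mxKr.
have -> : Db = row_mx 0 1%:M *m G.
  apply: strict_diff0_restrict hG hDb => x; rewrite mul_mx_row mulmx1 mulmx0.
    by apply: vnorm_row_mx_le; rewrite ?vnorm0 ?vnorm_ge0.
  by rewrite row_mxKl row_mxKr.
by rewrite -[G in RHS]vsubmxK !mul_row_col !mul1mx !mul0mx addr0 add0r vsubmxK.
Qed.

Variables (T : F -> Prop).
Hypotheses (hT : is_subring T) (hTt : T t).

Definition sat_lattice (M : F -> Prop) : Prop :=
  [/\ is_submodule T M, tadic_complete M t, (forall x, M x -> R0 x) &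
      forall x, M x -> (exists r, R0 r /\ x = t * r) -> exists v, M v /\ x = t * v].

Lemma T_tX n : T (t ^+ n).
Proof.
case: hT => _ h1 _ _ hM.
by elim: n => [|n IH]; [rewrite expr0 | rewrite exprS; apply: hM].
Qed.

Section Lattice.
Variable M : F -> Prop.
Hypothesis hM : sat_lattice M.

Lemma lat0 : M 0. Proof. by case: hM => -[]. Qed.

Lemma latD x y : M x -> M y -> M (x + y).
Proof. by case: hM => -[_ hD _] _ _ _; apply: hD. Qed.

Lemma latT r x : T r -> M x -> M (r * x).
Proof. by case: hM => -[_ _ hT'] _ _ _; apply: hT'. Qed.

Lemma latB x y : M x -> M y -> M (x - y).
Proof.
move=> hx hy; apply: latD => //; rewrite -mulN1r; apply: latT => //.
by case: hT => _ h1 hN _ _; apply: hN h1.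
Qed.

Lemma latXt n x : M x -> M (t ^+ n * x).
Proof. by apply: latT; apply: T_tX. Qed.

Lemma lat_R0 x : M x -> R0 x. Proof. by case: hM => _ _ h _; apply: h. Qed.

Lemma lat_div m x : M x -> absv x <= rad m -> exists v, M v /\ x = t ^+ m * v.
Proof.
elim: m x => [|m IH] x hx hle; first by exists x; rewrite expr0 mul1r.
have [r [hr ex]] := absv_le_rad hle.
have [v [hv ev]] : exists v, M v /\ x = t * v.
  case: hM => _ _ _; apply=> //; exists (t ^+ m * r).
  by rewrite ex exprS mulrA; split=> //; apply: R0_M => //; apply: R0_tX.
have hv_le : absv v <= rad m.
  by move: hle; rewrite ev absvM -[t]expr1 absvX -[m.+1]add1n radD ler_pM2l ?rad_gt0.
have [w [hw evw]] := IH v hv hv_le.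
by exists w; rewrite ev evw exprS mulrA.
Qed.

Lemma lat_lim (xs : nat -> F) : (forall k, M (xs k)) ->
  (forall k, absv (xs k.+1 - xs k) <= rad k.+1) ->
  exists x, M x /\ forall k, absv (x - xs k) <= rad k.+1.
Proof.
move=> hxs hc; case: hM => _ [_ hlim] _ _.
have hdiv k := lat_div (latB (hxs k.+1) (hxs k)) (hc k).
have [x [hx hk]] := hlim xs hxs hdiv.
exists x; split => // k; have [y [hy ->]] := hk k.
rewrite absvM absvX -[X in _ <= X]mulr1 ler_wpM2l ?rad_ge0 //.
exact/absv_le1/(lat_R0 hy).
Qed.

End Lattice.

Lemma sat_lattice_R0 :
  tadic_complete R0 t -> (forall x, T x -> R0 x) -> sat_lattice R0.
Proof.
move=> hR0c hTR0; split => //.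
split; first by case: R0_subring.
  exact: R0_D.
by move=> r x /hTR0; apply: R0_M.
Qed.

Definition row_in n (P : 'I_n -> F -> Prop) (z : 'rV[F]_n) := forall i, P i (z 0 i).

Section RowLattice.
Variables (n : nat) (P : 'I_n -> F -> Prop).
Hypothesis hP : forall i, sat_lattice (P i).

Lemma row_in0 : row_in P 0.
Proof. by move=> i; rewrite mxE; apply: lat0. Qed.

Lemma row_inD z z' : row_in P z -> row_in P z' -> row_in P (z + z').
Proof. by move=> h h' i; rewrite mxE; apply: latD. Qed.

Lemma row_inB z z' : row_in P z -> row_in P z' -> row_in P (z - z').
Proof. by move=> h h' i; rewrite !mxE; apply: latB. Qed.

Lemma row_inXt m z : row_in P z -> row_in P (t ^+ m *: z).
Proof. by move=> h i; rewrite mxE; apply: latXt. Qed.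

Lemma row_in_vnorm_le1 z : row_in P z -> vn z <= 1.
Proof. by move=> h; apply: R0_vnorm_le1 => i; apply: lat_R0 (h i). Qed.

Lemma row_in_lim (zs : nat -> 'rV[F]_n) (m : nat -> nat) :
  (forall k, row_in P (zs k)) -> {homo m : i j / (i <= j)%N} -> (forall k, (k < m k)%N) ->
  (forall k, vn (zs k.+1 - zs k) <= rad (m k)) ->
  exists z, row_in P z /\ forall k, vn (z - zs k) <= rad (m k).
Proof.
move=> hzs m_mono m_gt hc.
have hc1 k i : absv (zs k.+1 0 i - zs k 0 i) <= rad k.+1.
  have := absv_le_vnorm (zs k.+1 - zs k) i; rewrite !mxE => /le_trans; apply.
  exact: le_trans (hc k) (rad_le (m_gt k)).
have /fin_all_exists [x hx] i := lat_lim (hP i) (fun k => hzs k i) (hc1^~ i).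
exists (\row_i x i); split=> [i|k]; first by rewrite mxE; case: (hx i).
rewrite (subr_trans (zs (k + m k)%N)).
apply: vnormD_le; last exact: vnorm_telescope.
apply: vnorm_le => [|i]; rewrite ?rad_ge0 // !mxE.
apply: le_trans (proj2 (hx i) (k + m k)%N) _.
by rewrite rad_le // ltnW // ltnS leq_addl.
Qed.

End RowLattice.

Lemma row_invert_t n (P : 'I_n -> F -> Prop) (x : 'rV[F]_n) :
  (forall i, sat_lattice (P i)) -> (forall i, invert_t (P i) t (x 0 i)) ->
  exists N, forall N', (N <= N')%N -> row_in P (t ^+ N' *: x).
Proof.
move=> hP hx; have [nx hnx] := fin_all_exists hx; have [v hv] := fin_all_exists hnx.
exists (\sum_i nx i)%N => N' hN' i; rewrite mxE; have [hvi ->] := hv i.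
have hi : (nx i <= N')%N by apply: leq_trans hN'; rewrite (bigD1 i) //= leq_addr.
rewrite -(subnK hi) exprD -mulrA mulVKf ?expf_neq0 ?t_neq0 //.
exact: latXt.
Qed.

Definition block_pred a b (V W : F -> Prop) (i : 'I_(a + b)) : F -> Prop :=
  if (i < a)%N then V else W.

Lemma row_in_block a b (V W : F -> Prop) (u : 'rV[F]_(a + b)) :
  row_in (block_pred V W) u <->
  row_in (fun _ => V) (lsubmx u) /\ row_in (fun _ => W) (rsubmx u).
Proof.
split=> [hu|[hl hr] i].
  split=> i; rewrite mxE; [have := hu (lshift b i) | have := hu (rshift a i)];
    by rewrite /block_pred /= ?ltn_ord // ltnNge leq_addr.
rewrite /block_pred; case: splitP => k ei.
  have -> : i = lshift b k by apply: val_inj.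
  by have := hl k; rewrite mxE.
have -> : i = rshift a k by apply: val_inj.
by have := hr k; rewrite mxE.
Qed.

Section Density.
Variables (n c : nat) (P : 'I_n -> F -> Prop) (L : 'M[F]_(n, c)).
Hypotheses (hP : forall i, sat_lattice (P i)) (hR0lat : sat_lattice R0)
  (hL : forall y : 'rV[F]_c, exists N z, row_in P z /\ t ^+ N *: y = z *m L).

Definition approximable (j : nat) (y : 'rV[F]_c) : Prop :=
  forall l, exists z, row_in P z /\ vn (t ^+ j *: y - z *m L) <= rad l.

(* Baire category in the complete space R0^c: otherwise pick Y k.+1 in the ball of
   radius rad (m k) around Y k with t^k Y k.+1 farther than rad (l k) from L(P), and
   shrink to m k.+1 > l k; the limit ys has no t^N ys in L(P), contradicting hL. *)
Lemma baire_ball : exists j y0 m, forall y, vn (y - y0) <= rad m -> approximable j y.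
Proof.
apply: contrapT => hneg.
have step (jym : nat * 'rV[F]_c * nat) : exists yl : 'rV[F]_c * nat,
    vn (yl.1 - jym.1.2) <= rad jym.2 /\
    forall z, row_in P z -> rad yl.2 < vn (t ^+ jym.1.1 *: yl.1 - z *m L).
  case: jym => -[j y0] m; apply: contrapT => h; apply: hneg; exists j, y0, m => y hy l.
  apply: contrapT => hl; apply: h; exists (y, l); split => // z hz.
  by rewrite ltNge; apply/negP => hle; apply: hl; exists z.
have [stp hstp] := choice step.
pose next k (p : 'rV[F]_c * nat) := ((stp (k, p.1, p.2)).1, (maxn (stp (k, p.1, p.2)).2 p.2).+1).
pose sq k := iteri k next (0, 1%N).
pose Y k := (sq k).1; pose m k := (sq k).2; pose l k := (stp (k, Y k, m k)).2.
have hY k : vn (Y k.+1 - Y k) <= rad (m k) by case: (hstp (k, Y k, m k)).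
have hl k z : row_in P z -> rad (l k) < vn (t ^+ k *: Y k.+1 - z *m L).
  by case: (hstp (k, Y k, m k)) => _; apply.
have m_lt k : (m k < m k.+1)%N by rewrite /m /= ltnS leq_maxr.
have m_mono : {homo m : i j / (i <= j)%N}.
  by apply: homo_leq => // [? ? ? /leq_trans|k]; [apply | apply: ltnW].
have m_gt k : (k < m k)%N by elim: k => // k IH; apply: leq_ltn_trans IH (m_lt k).
have Y_R0 k : row_in (fun _ => R0) (Y k).
  move=> i; apply/absv_le1_R0/(le_trans (absv_le_vnorm _ i)).
  elim: k => [|k IH]; first by rewrite /Y /= vnorm0.
  by rewrite -(subrK (Y k) (Y k.+1)); apply: vnormD_le IH; apply: le_trans (hY k) (rad_le1 _).
have [ys [_ hys]] := row_in_lim (fun=> hR0lat) Y_R0 m_mono m_gt hY.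
have [N [z [hz hzN]]] := hL ys.
have := hl N z hz; rewrite -hzN -scalerBr vnorm_tZ; apply/negP; rewrite -leNgt.
apply: le_trans (ler_wpM2r (vnorm_ge0 _) (rad_le1 N)) _; rewrite mul1r -vnormN opprB.
by apply: le_trans (hys N.+1) _; rewrite rad_le // /m /= ltnW // ltnS leq_maxl.
Qed.

Lemma approximable_unit_ball : exists K, forall y, vn y <= 1 -> approximable K y.
Proof.
have [j [y0 [m hball]]] := baire_ball.
exists (j + m)%N => y hy l.
have h1 : vn (y0 + t ^+ m *: y - y0) <= rad m.
  by rewrite addrC addKr vnorm_tZ -[X in _ <= X]mulr1 ler_wpM2l ?rad_ge0.
have h2 : vn (y0 - y0) <= rad m by rewrite subrr vnorm0 rad_ge0.
have [z1 [hz1 e1]] := hball _ h1 l; have [z2 [hz2 e2]] := hball _ h2 l.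
exists (z1 - z2); split; first exact: row_inB.
have -> : t ^+ (j + m) *: y - (z1 - z2) *m L =
    (t ^+ j *: (y0 + t ^+ m *: y) - z1 *m L) - (t ^+ j *: y0 - z2 *m L).
  by rewrite mulmxBl exprD; row_ring.
exact: vnormB_le.
Qed.

End Density.

Section Newton.
Variables (n c : nat) (P : 'I_n -> F -> Prop) (D : 'rV[F]_n -> Prop)
  (g : 'rV[F]_n -> 'rV[F]_c) (G : 'M[F]_(n, c)) (K j : nat).
Hypotheses (hP : forall i, sat_lattice (P i)) (g0 : g 0 = 0)
  (hK : forall y, vn y <= 1 -> approximable P G K y)
  (hj : forall p q, vn p <= rad j -> vn q <= rad j ->
     D p /\ vn (g p - g q - (p - q) *m G) <= rad K.+1 * vn (p - q)).
Variable y : 'rV[F]_c.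

Definition newton_inv k u :=
  [/\ row_in P u, vn u <= rad j.+1 & vn (y - g u) <= rad (K + (j.+1 + k))].

Lemma newton_step k u : newton_inv k u ->
  exists d, [/\ row_in P d, vn d <= rad (j.+1 + k) & newton_inv k.+1 (u + d)].
Proof.
(* With y - g u = t^(K + s) r, pick z in P with z G close to t^K r: d = t^s z gains a
   factor t in the residual. *)
case=> hu hu_le hres; set s := (j.+1 + k)%N.
have [r [hr er]] := vnorm_le_rad hres.
have [z [hz hzG]] := hK (R0_vnorm_le1 hr) K.+1.
pose d := t ^+ s *: z.
have hd : vn d <= rad s.
  by rewrite vnorm_tZ -[X in _ <= X]mulr1 ler_wpM2l ?rad_ge0 ?(row_in_vnorm_le1 hP).
have hd_j : vn d <= rad j.+1 by apply: le_trans hd (rad_le (leq_addr _ _)).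
have hud : vn (u + d) <= rad j.+1 := vnormD_le hu_le hd_j.
have hj1 : rad j.+1 <= rad j := rad_le (leqnSn j).
have hdP : row_in P d by apply: row_inXt.
exists d; split => //; split => //; first exact: row_inD.
have -> : (K + (j.+1 + k.+1) = s + K.+1)%N by rewrite /s; lia.
have hlin : vn (y - g u - d *m G) <= rad (s + K.+1).
  have -> : y - g u - d *m G = t ^+ s *: (t ^+ K *: r - z *m G).
    by rewrite er -scalemxAl scalerBr scalerA -exprD addnC.
  by rewrite vnorm_tZ radD ler_wpM2l ?rad_ge0.
have [_ hg] := hj (le_trans hud hj1) (le_trans hu_le hj1).
rewrite (addrAC u d) subrr add0r in hg.
have -> : y - g (u + d) = (y - g u - d *m G) - (g (u + d) - g u - d *m G) by row_ring.
apply: vnormB_le hlin (le_trans hg _).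
by rewrite radD mulrC ler_wpM2r ?rad_ge0.
Qed.

Lemma newton_solve : vn y <= rad (K + j.+1) -> exists u, [/\ row_in P u, D u & g u = y].
Proof.
move=> hy; have hj1 : rad j.+1 <= rad j := rad_le (leqnSn j).
have step (ku : nat * 'rV[F]_n) : exists d, newton_inv ku.1 ku.2 ->
    [/\ row_in P d, vn d <= rad (j.+1 + ku.1) & newton_inv ku.1.+1 (ku.2 + d)].
  have [/newton_step [d hd]|hn] := pselect (newton_inv ku.1 ku.2); first by exists d.
  by exists 0 => /hn.
have [dk hdk] := choice step.
pose U k := iteri k (fun k u => u + dk (k, u)) 0.
have inv k : newton_inv k (U k).
  elim: k => [|k IH]; last by case: (hdk (k, U k) IH).
  by split; rewrite /U /= ?vnorm0 ?rad_ge0 ?g0 ?subr0 ?addn0 //; apply: row_in0.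
have hU k : vn (U k.+1 - U k) <= rad (j.+1 + k).
  by case: (hdk (k, U k) (inv k)) => _ hd _; rewrite /= addrC addKr.
have m_mono : {homo (fun k => j.+1 + k)%N : k l / (k <= l)%N}.
  by move=> k l; rewrite leq_add2l.
have m_gt k : (k < j.+1 + k)%N by rewrite addSn ltnS leq_addl.
have [u [hu hlim]] := row_in_lim hP (fun k => let: And3 h _ _ := inv k in h) m_mono m_gt hU.
have hu_le : vn u <= rad j.+1 by have := hlim 0%N; rewrite /U /= subr0 addn0.
exists u; split => //; first exact: (hj (le_trans hu_le hj1) (le_trans hu_le hj1)).1.
apply/eqP; rewrite eq_sym -subr_eq0; apply/eqP.
apply: (@vnorm_rad_eq0 _ _ (1 + vn (mxvec G))) => [|k]; first by rewrite addr_ge0 ?vnorm_ge0.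
have [_ hUk hres] := inv k.
have [_ hg] := hj (le_trans hu_le hj1) (le_trans hUk hj1).
have hdist : vn (u - U k) <= rad k by apply: le_trans (hlim k) (rad_le (leq_addl _ _)).
have h1 : rad k <= (1 + vn (mxvec G)) * rad k by rewrite ler_peMl ?rad_ge0 ?lerDl ?vnorm_ge0.
have -> : y - g u = (y - g (U k)) - (g u - g (U k) - (u - U k) *m G) - (u - U k) *m G.
  by row_ring.
apply: vnormB_le; first apply: vnormB_le.
- by apply: le_trans hres (le_trans (rad_le _) h1); rewrite addnA leq_addl.
- apply: le_trans hg (le_trans _ h1).
  by rewrite -[X in _ <= X]mul1r ler_pM ?rad_ge0 ?vnorm_ge0 ?rad_le1.
apply: le_trans (vnorm_mulmx_le _ _) (ler_pM (vnorm_ge0 _) (vnorm_ge0 _) _ hdist).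
by rewrite lerDr.
Qed.

End Newton.

Hypotheses (hR0c : tadic_complete R0 t) (hTR0 : forall x, T x -> R0 x).

Lemma analytic_lattice_surjective_near0 a b c (V W : F -> Prop)
    (Omega : 'rV[F]_a -> 'rV[F]_b -> Prop) (f : 'rV[F]_a -> 'rV[F]_b -> 'rV[F]_c)
    (Da : 'M[F]_(a, c)) (Db : 'M[F]_(b, c)) :
  sat_lattice V -> sat_lattice W -> Omega 0 0 ->
  analytic_on absv (fun z : 'rV[F]_(a + b) => Omega (lsubmx z) (rsubmx z))
    (fun z => f (lsubmx z) (rsubmx z)) ->
  f 0 0 = 0 ->
  is_diff0 absv (fun x => Omega x 0) (fun x => f x 0) Da ->
  is_diff0 absv (fun y => Omega 0 y) (fun y => f 0 y) Db ->
  (forall y : 'rV[F]_c, exists (x : 'rV[F]_a) (z : 'rV[F]_b),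
      (forall i, invert_t V t (x 0 i)) /\ (forall j, invert_t W t (z 0 j)) /\
      y = x *m Da + z *m Db) ->
  exists eps : R, 0 < eps /\ forall y : 'rV[F]_c, vn y <= eps ->
    exists (v : 'rV[F]_a) (w : 'rV[F]_b),
      row_in (fun _ => V) v /\ row_in (fun _ => W) w /\ Omega v w /\ f v w = y.
Proof.
move=> hV hW hOm0 hfan hf0 hDa hDb hsurj.
have hP (i : 'I_(a + b)) : sat_lattice (block_pred V W i).
  by rewrite /block_pred; case: ifP.
have [l0 r0] : lsubmx (0 : 'rV[F]_(a + b)) = 0 /\ rsubmx (0 : 'rV[F]_(a + b)) = 0.
  by rewrite -row_mx0 row_mxKl row_mxKr.
have D0 : Omega (lsubmx (0 : 'rV[F]_(a + b))) (rsubmx (0 : 'rV[F]_(a + b))).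
  by rewrite l0 r0.
have [G hG] := analytic_strict_diff0 D0 hfan.
have hL y : exists N z, row_in (block_pred V W) z /\ t ^+ N *: y = z *m G.
  have [x [z [hx [hz ->]]]] := hsurj y.
  have [Nx hNx] := row_invert_t (fun=> hV) hx; have [Nz hNz] := row_invert_t (fun=> hW) hz.
  exists (Nx + Nz)%N, (t ^+ (Nx + Nz) *: row_mx x z); split.
    apply/row_in_block; rewrite scale_row_mx row_mxKl row_mxKr.
    by split; [apply: hNx; rewrite leq_addr | apply: hNz; rewrite leq_addl].
  by rewrite -scalemxAl (strict_diff0_block hG hDa hDb) mul_row_col.
have [K hK] := approximable_unit_ball hP (sat_lattice_R0 hR0c hTR0) hL.
have [j hj] := hG _ (rad_gt0 K.+1).
exists (rad (K + j.+1)); split=> [|y hy]; first exact: rad_gt0.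
have g0 : f (lsubmx (0 : 'rV[F]_(a + b))) (rsubmx (0 : 'rV[F]_(a + b))) = 0.
  by rewrite l0 r0.
have [u [hu hDu <-]] := newton_solve hP g0 hK hj hy.
by case/row_in_block: hu => hv hw; exists (lsubmx u), (rsubmx u).
Qed.

End Valuation.

Theorem proposition3p2
  (R : realType) (F0 : fieldType) (absv : F0 -> R) (alpha : R) (t : F0)
  (T R0 F1 F2 V W : F0 -> Prop)
  (* R0: complete DVR with uniformizer t and fraction field F0 *)
  (hR0 : is_dvr_unif R0 t)
  (hR0frac : forall x : F0, x != 0 -> exists n : int, exists u, unit_of R0 u /\ x = t ^ n * u)
  (hR0c : tadic_complete R0 t)
  (* the absolute value |t^n u| = alpha^(-n) *)
  (halpha : 1 < alpha)
  (habs0 : absv 0 = 0)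
  (habs : forall (n : int) (u : F0), unit_of R0 u -> absv (t ^ n * u) = alpha ^ (- n))
  (* T: complete DVR with uniformizer t, contained in R0 *)
  (hT : is_dvr_unif T t) (hTc : tadic_complete T t)
  (hTR0 : forall x, T x -> R0 x)
  (* F1, F2 subfields of F0 containing T *)
  (hF1 : is_subfield F1) (hF2 : is_subfield F2)
  (hTF1 : forall x, T x -> F1 x) (hTF2 : forall x, T x -> F2 x)
  (* V, W *)
  (hVsub : forall x, V x -> F1 x /\ R0 x) (hWsub : forall x, W x -> F2 x /\ R0 x)
  (hVmod : is_submodule T V) (hWmod : is_submodule T W)
  (hVc : tadic_complete V t) (hWc : tadic_complete W t)
  (hVW : forall x, R0 x -> exists v w, V v /\ W w /\ x = v + w)
  (hVt : forall x, (V x /\ exists r, R0 r /\ x = t * r) <-> exists v, V v /\ x = t * v)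
  (hWt : forall x, (W x /\ exists r, R0 r /\ x = t * r) <-> exists w, W w /\ x = t * w)
  (* a, b, c positive; Omega open neighbourhood of (0,0); f analytic on Omega *)
  (a b c : nat) (ha : (0 < a)%N) (hb : (0 < b)%N) (hc : (0 < c)%N)
  (Omega : 'rV[F0]_a -> 'rV[F0]_b -> Prop)
  (f : 'rV[F0]_a -> 'rV[F0]_b -> 'rV[F0]_c)
  (hOmopen : is_open absv (fun z : 'rV[F0]_(a + b) => Omega (lsubmx z) (rsubmx z)))
  (hOm0 : Omega 0 0)
  (hfan : analytic_on absv (fun z : 'rV[F0]_(a + b) => Omega (lsubmx z) (rsubmx z))
                            (fun z => f (lsubmx z) (rsubmx z)))
  (* (i) *)
  (hf0 : f 0 0 = 0)
  (* (ii) *)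
  (Da : 'M[F0]_(a, c)) (Db : 'M[F0]_(b, c))
  (hDa : is_diff0 absv (fun x => Omega x 0) (fun x => f x 0) Da)
  (hDb : is_diff0 absv (fun y => Omega 0 y) (fun y => f 0 y) Db)
  (hsurj : forall y : 'rV[F0]_c, exists (x : 'rV[F0]_a) (z : 'rV[F0]_b),
      (forall i, invert_t V t (x ord0 i)) /\ (forall j, invert_t W t (z ord0 j)) /\
      y = x *m Da + z *m Db) :
  exists eps : R, 0 < eps /\
    forall y : 'rV[F0]_c, vnorm absv y <= eps ->
      exists (v : 'rV[F0]_a) (w : 'rV[F0]_b),
        (forall i, V (v ord0 i)) /\ (forall j, W (w ord0 j)) /\ Omega v w /\ f v w = y.
Proof.
have [hTsub hTt _ _ _] := hT.
have lat M : is_submodule T M -> tadic_complete M t -> (forall x, M x -> R0 x) ->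
    (forall x, (M x /\ exists r, R0 r /\ x = t * r) <-> exists v, M v /\ x = t * v) ->
    sat_lattice t R0 T M.
  by move=> hmod hcomp hMR0 hsat; split=> // x hx hr; apply/hsat.
have hV := lat V hVmod hVc (fun x hx => (hVsub x hx).2) hVt.
have hW := lat W hWmod hWc (fun x hx => (hWsub x hx).2) hWt.
have [eps [eps0 heps]] := analytic_lattice_surjective_near0 halpha hR0 hR0frac habs0 habs
  hTsub hTt hR0c hTR0 hV hW hOm0 hfan hf0 hDa hDb hsurj.
by exists eps; split=> // y /heps [v [w [hv [hw hvw]]]]; exists v, w.
Qed.
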